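(* Let $\mathcal{G}=\{G_1,\dots,G_M\}$ be groups, let $\vec z\in\mathbb{R}^p$ have support contained in $\bigcup_{i=1}^MG_i$, let $k\ge k^*$ be positive integers, and let $\widehat{\vec w}=P_k^{\mathcal{G}}(\vec z)$ and $\vec w^*=P_{k^*}^{\mathcal{G}}(\vec z)$. Then \[ \|\widehat{\vec w}-\vec z\|_2^2\le\frac{M-k}{M-k^*}\,\|\vec w^*-\vec z\|_2^2. \]
   Context: $\|\vec w\|_0^{\mathcal{G}}$ is the minimum number of nonzero terms in a decomposition $\vec w=\sum_i\vec a_{G_i}$ with $\operatorname{supp}(\vec a_{G_i})\subseteq G_i$. Exact projection: $P_k^{\mathcal{G}}(\vec z)=\arg\min_{\vec w}\|\vec w-\vec z\|_2^2$ subject to $\|\vec w\|_0^{\mathcal{G}}\le k$. *)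

From HB Require Import structures.
From mathcomp Require Import all_boot all_order all_algebra.
From mathcomp Require Import reals.
Set Implicit Arguments. Unset Strict Implicit. Unset Printing Implicit Defensive.
Import Order.TTheory GRing.Theory Num.Theory.
Local Open Scope ring_scope.

Definition sqdist (R : realType) (p : nat) (w z : 'I_p -> R) : R :=
  \sum_(j < p) (w j - z j) ^+ 2.

Definition group_decomp (R : realType) (p M : nat) (G : 'I_M -> {set 'I_p})
  (w : 'I_p -> R) (a : 'I_M -> 'I_p -> R) : Prop :=
  (forall i j, j \notin G i -> a i j = 0) /\ (forall j, w j = \sum_(i < M) a i j).

Definition nnz_terms (R : realType) (p M : nat) (a : 'I_M -> 'I_p -> R) : nat :=
  #|[set i : 'I_M | [exists j : 'I_p, a i j != 0]]|.

(* ||w||_0^G <= k : the minimum number of nonzero terms over all group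
   decompositions of w is at most k, i.e. some decomposition has at most
   k nonzero terms. *)
Definition gnorm_le (R : realType) (p M : nat) (G : 'I_M -> {set 'I_p})
  (w : 'I_p -> R) (k : nat) : Prop :=
  exists a, group_decomp G w a /\ (nnz_terms a <= k)%N.

Definition is_proj (R : realType) (p M : nat) (G : 'I_M -> {set 'I_p})
  (k : nat) (z w : 'I_p -> R) : Prop :=
  gnorm_le G w k /\ forall v, gnorm_le G v k -> sqdist w z <= sqdist v z.

From HB Require Import structures.
From mathcomp Require Import all_boot all_order all_algebra.
From mathcomp Require Import reals.
From mathcomp Require Import lra.
Set Implicit Arguments. Unset Strict Implicit. Unset Printing Implicit Defensive.
Import Order.TTheory GRing.Theory Num.Theory.
Local Open Scope ring_scope.

(* For S a set of group indices let res(S) be the energy of z outside the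
   union of the groups in S.  The projection error at level k is exactly
   min_{|S| <= k} res(S).  As the groups cover the support of z, the energies
   that the groups outside S would newly cover add up to at least res(S), so
   one of them removes a 1/(M - |S|) fraction of it.  Growing an optimal set
   of size at most k* greedily up to size k multiplies res by a telescoping
   product of factors (M - n - 1)/(M - n), that is by (M - k)/(M - |S|),
   which is at most (M - k)/(M - k* ). *)

Lemma exists_ge_average (R : realDomainType) (I : finType) (A : {pred I})
    (c : I -> R) (x : R) :
  (0 < #|A|)%N -> x <= \sum_(i in A) c i -> exists2 i, i \in A & x <= #|A|%:R * c i.
Proof.
move=> A_gt0 x_le; apply/exists_inP; apply: contraLR x_le.
rewrite negb_exists_in -ltNge => /forall_inP small.
have [i0 Ai0] := card_gt0P A_gt0.
have : \sum_(i in A) #|A|%:R * c i < \sum_(i in A) x.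
  apply: ltr_sum => [|i /small]; last by rewrite ltNge.
  by apply/hasP; exists i0; rewrite ?mem_index_enum.
by rewrite -mulr_sumr sumr_const -[x *+ _]mulr_natl ltr_pM2l // ltr0n.
Qed.

Section GreedyCover.

Variables (R : realType) (p M : nat) (G : 'I_M -> {set 'I_p}) (z : 'I_p -> R).
Implicit Types S : {set 'I_M}.

Definition cover S : {set 'I_p} := \bigcup_(i in S) G i.

Definition residual S : R := \sum_(j | j \notin cover S) z j ^+ 2.

Definition gain S (i : 'I_M) : R :=
  \sum_(j | (j \notin cover S) && (j \in G i)) z j ^+ 2.

Definition restrict_cover S (j : 'I_p) : R :=
  if j \in cover S then z j else 0.

Lemma residual_ge0 S : 0 <= residual S.
Proof. by apply: sumr_ge0 => j _; exact: sqr_ge0. Qed.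

Lemma residual_le_sqdist (w : 'I_p -> R) (n : nat) :
  gnorm_le G w n -> exists S, (#|S| <= n)%N /\ residual S <= sqdist w z.
Proof.
case=> a [[a_supp w_sum] a_nnz].
set S := [set i | [exists j, a i j != 0]]; exists S; split=> //.
rewrite /sqdist (bigID (fun j => j \notin cover S)) /=.
have -> : \sum_(j | j \notin cover S) (w j - z j) ^+ 2 = residual S.
  apply: eq_bigr => j j_out; suff -> : w j = 0 by rewrite sub0r sqrrN.
  rewrite w_sum big1 // => i _; have [Si|] := boolP (i \in S).
    by apply: a_supp; apply: contra j_out => Gij; apply/bigcupP; exists i.
  by rewrite inE negb_exists => /forallP/(_ j); rewrite negbK => /eqP.
by rewrite lerDl; apply: sumr_ge0 => j _; exact: sqr_ge0.
Qed.

Lemma sqdist_restrict_cover S : sqdist (restrict_cover S) z = residual S.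
Proof.
rewrite /sqdist (bigID (fun j => j \in cover S)) /= big1 ?add0r.
  by apply: eq_bigr => j /negbTE j_out; rewrite /restrict_cover j_out sub0r sqrrN.
by move=> j j_in; rewrite /restrict_cover j_in subrr expr0n.
Qed.

(* Each covered coordinate is charged to the first group of S containing it. *)
Lemma gnorm_le_restrict_cover S : gnorm_le G (restrict_cover S) #|S|.
Proof.
pose a i j := if [pick i0 in S | j \in G i0] == Some i then z j else 0.
exists a; split; first split.
- move=> i j j_out; rewrite /a; case: pickP => [i0 /andP[_ Gi0j]|_] //.
  by case: ifP => // /eqP[i0i]; rewrite -i0i Gi0j in j_out.
- move=> j; rewrite /restrict_cover /a; case: pickP => [i0 /andP[Si0 Gi0j]|none].
    rewrite (bigD1 i0) //= eqxx big1 ?addr0.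
      by rewrite ifT //; apply/bigcupP; exists i0.
    by move=> i i_ne; case: ifP => // /eqP[i0i]; rewrite i0i eqxx in i_ne.
  rewrite big1 // ifF //; apply/negbTE/bigcupP => -[i0 Si0 Gi0j].
  by move: (none i0); rewrite Si0 Gi0j.
- apply: subset_leq_card; apply/subsetP => i; rewrite inE => /existsP[j].
  rewrite /a; case: pickP => [i0 /andP[Si0 _]|_]; last by rewrite eqxx.
  by case: ifP => [/eqP[<-] //|]; rewrite eqxx.
Qed.

Lemma proj_le_residual (k : nat) (w : 'I_p -> R) S :
  is_proj G k z w -> (#|S| <= k)%N -> sqdist w z <= residual S.
Proof.
case=> _ w_min S_le; rewrite -sqdist_restrict_cover; apply: w_min.
have [a [a_dec a_nnz]] := gnorm_le_restrict_cover S.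
by exists a; split; last exact: leq_trans S_le.
Qed.

Lemma residualU1 S i : i \notin S -> residual S = gain S i + residual (i |: S).
Proof.
move=> Si; rewrite /residual (bigID (fun j => j \in G i)) /=; congr (_ + _).
by apply: eq_bigl => j; rewrite /cover big_setU1 //= inE negb_or andbC.
Qed.

Hypothesis z_covered : forall j, z j != 0 -> exists i, j \in G i.

Lemma residual_setT : residual setT = 0.
Proof.
apply: big1 => j j_out; have [-> | /z_covered[i Gij]] := eqVneq (z j) 0.
  by rewrite expr0n.
by move: j_out; rewrite (_ : j \in cover setT) //; apply/bigcupP; exists i.
Qed.

Lemma residual_le_sum_gain S : residual S <= \sum_(i in ~: S) gain S i.
Proof.
rewrite (exchange_big_dep (fun j => j \notin cover S)) /=; last by move=> i j _ /andP[].
apply: ler_sum => j j_out.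
have [-> | /z_covered[i Gij]] := eqVneq (z j) 0.
  by rewrite expr0n /=; apply: sumr_ge0.
have i_out : i \in ~: S.
  by rewrite inE; apply: contra j_out => Si; apply/bigcupP; exists i.
rewrite (bigD1 i) /=; last by rewrite i_out j_out Gij.
by rewrite lerDl; apply: sumr_ge0 => i' _; exact: sqr_ge0.
Qed.

Lemma greedy_step S : (#|S| < M)%N ->
  exists2 i, i \notin S &
    (M%:R - #|S|%:R) * residual (i |: S) <= (M%:R - #|S|%:R - 1) * residual S.
Proof.
move=> S_lt; have cardC : #|~: S| = (M - #|S|)%N.
  by rewrite -{1}(addKn #|S| #|~: S|) cardsC card_ord.
have [|i] := exists_ge_average _ (residual_le_sum_gain S).
  by rewrite cardC subn_gt0.
rewrite inE cardC natrB ?(ltnW S_lt) // => Si gain_large; exists i => //.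
by move: gain_large; rewrite (residualU1 Si) mulrDr; lra.
Qed.

Lemma greedy_iterate S (n : nat) : (#|S| <= n <= M)%N ->
  exists S', #|S'| = n /\
    (M%:R - #|S|%:R) * residual S' <= (M%:R - n%:R) * residual S.
Proof.
elim: n => [|n IH] /andP[S_le n_le].
  by exists S; move: S_le; rewrite leqn0 => /eqP->.
have [S_eq | S_ne] := eqVneq #|S| n.+1; first by exists S; rewrite S_eq.
have S_le_n : (#|S| <= n)%N by rewrite -ltnS ltn_neqAle S_ne S_le.
have [|S1 [S1_card S1_res]] := IH; first by rewrite S_le_n ltnW.
have [|i S1i step] := greedy_step (S := S1); first by rewrite S1_card.
exists (i |: S1); split; first by rewrite cardsU1 S1i S1_card.
rewrite S1_card in step; rewrite -natr1.
have s_le : (#|S|%:R : R) <= n%:R by rewrite ler_nat.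
have n_lt : (n%:R : R) + 1 <= M%:R by rewrite natr1 ler_nat.
have := residual_ge0 S; have := residual_ge0 S1; have := residual_ge0 (i |: S1).
nra.
Qed.

End GreedyCover.

Unset Implicit Arguments.
Theorem lemma6 (R : realType) (p M : nat) (G : 'I_M -> {set 'I_p})
  (z : 'I_p -> R) (k kstar : nat) (what wstar : 'I_p -> R) :
  (forall j, z j != 0 -> exists i, j \in G i) ->
  (0 < kstar)%N -> (kstar <= k)%N -> (k <= M)%N ->
  is_proj G k z what -> is_proj G kstar z wstar ->
  sqdist what z <= ((M%:R - k%:R) / (M%:R - kstar%:R)) * sqdist wstar z.
Proof.
move=> z_covered _ kstar_le k_le what_proj wstar_proj.
have [k_lt | M_le] := ltnP k M; last first.
  have k_eq : k = M by apply/anti_leq; rewrite k_le M_le.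
  rewrite k_eq subrr !mul0r -(residual_setT z_covered).
  by apply: proj_le_residual what_proj _; rewrite cardsT card_ord k_eq.
have [S0 [S0_le S0_res]] := residual_le_sqdist z wstar_proj.1.
have [|S [S_card S_res]] := greedy_iterate z_covered (S := S0) (n := k).
  by rewrite (leq_trans S0_le kstar_le).
have what_res := proj_le_residual what_proj (eq_leq S_card).
have kstar_lt : (0 : R) < M%:R - kstar%:R.
  by rewrite subr_gt0 ltr_nat (leq_ltn_trans kstar_le k_lt).
rewrite mulrAC ler_pdivlMr //.
have s0_le : (#|S0|%:R : R) <= kstar%:R by rewrite ler_nat.
have k_le' : (kstar%:R : R) <= k%:R by rewrite ler_nat.
have k_lt' : (k%:R : R) < M%:R by rewrite ltr_nat.
have := residual_ge0 G z S; have := residual_ge0 G z S0.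
nra.
Qed.
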